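(* Let $(p,\mathcal D,L)$ be a Hadamard triple on $\mathbb R$ with $p>1$, $0\in\mathcal D\subset\{0,1,2,\dots\}$, and $p=\#\mathcal D$. Then $$T_{p,\mathcal D}=[0,1)\setminus\tfrac{1}{\gcd\mathcal D}\mathbb Z .$$
   Context: A Hadamard triple on $\mathbb R$ is a triple $(p,\mathcal D,L)$ with $p>1$ an integer, $\mathcal D,L\subset\mathbb Z$ finite with $\#\mathcal D=\#L$, such that $\frac{1}{\sqrt{\#\mathcal D}}\big[e^{2\pi i d\ell/p}\big]_{\ell\in L,d\in\mathcal D}$ is unitary. For finite $A\subset\mathbb R$, $\widehat{\delta_{cA}}(\xi)=\frac1{\#A}\sum_{a\in A}e^{2\pi i ca\xi}$. $T_{p,D}$ (the Double Points Condition Set) denotes the set of $\xi\in[0,1)$ for which there exist distinct $\ell_1,\ell_2\in\{0,\dots,p-1\}$ with $\widehat{\delta_{p^{-1}D}}(\xi+\ell_i)\ne0$, $i=1,2$. Here $\gcd\mathcal D$ is the greatest common divisor of the elements of $\mathcal D$ (with $\mathcal D\ne\{0\}$). *)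

From HB Require Import structures.
From mathcomp Require Import all_boot all_order all_algebra.
From mathcomp Require Import all_classical all_reals.
From mathcomp Require Import ereal topology normedtype sequences exp trigo.
From mathcomp Require Import complex.
Unset Printing Implicit Defensive.
Import Order.TTheory GRing.Theory Num.Theory.
Local Open Scope ring_scope.
Local Open Scope complex_scope.

Definition expi (R : realType) (t : R) : R[i] :=
  (cos (2 * pi * t) +i* sin (2 * pi * t))%C.

Arguments expi {R}.

(* The matrix (1/sqrt #D) [ e^{2 pi i d l / p} ]_{l in L, d in D},
   finite sets D, L of integers being represented by duplicate-free lists. *)
Definition hadamard_mx (R : realType) (p : nat) (D L : seq int)
  : 'M[R[i]]_(size L, size D) :=
  \matrix_(a < size L, b < size D)
    (((Num.sqrt ((size D)%:R : R))^-1)%:C *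
      expi ((nth 0 D b * nth 0 L a)%:~R / (p%:R : R))).

Definition unitary_mx (R : realType) (n : nat) (M : 'M[R[i]]_n) : Prop :=
  M *m (map_mx Num.conj M)^T = 1%:M /\ (map_mx Num.conj M)^T *m M = 1%:M.

Definition hadamard_triple (R : realType) (p : nat) (D L : seq int) : Prop :=
  [/\ (1 < p)%N, uniq D, uniq L &
    exists e : size L = size D,
      @unitary_mx R (size D) (castmx (e, erefl) (hadamard_mx R p D L))].

(* Fourier transform of the uniform measure on c A:
   \hat{delta_{cA}}(xi) = (1/#A) sum_{a in A} e^{2 pi i c a xi} *)
Definition ft_delta (R : realType) (c : R) (A : seq int) (xi : R) : R[i] :=
  ((size A)%:R : R[i])^-1 * \sum_(a <- A) expi (c * a%:~R * xi).

Arguments ft_delta {R}.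

Definition Tset (R : realType) (p : nat) (D : seq int) : set R :=
  [set xi | 0 <= xi < 1 /\
     exists l1 l2 : nat, [/\ (l1 < p)%N, (l2 < p)%N, l1 <> l2,
       ft_delta (p%:R^-1) D (xi + l1%:R) != 0 &
       ft_delta (p%:R^-1) D (xi + l2%:R) != 0]].

Definition gcd_seq (D : seq int) : int := foldr gcdz 0 D.

From HB Require Import structures.
From mathcomp Require Import all_boot all_order all_algebra.
From mathcomp Require Import all_classical all_reals.
From mathcomp Require Import ereal topology normedtype sequences exp trigo.
From mathcomp Require Import complex.
From mathcomp Require Import ring lra zify.
Import Order.TTheory GRing.Theory Num.Theory.
Local Open Scope ring_scope.
Local Open Scope classical_set_scope.

(* Write e(t) = exp(2 pi i t) and, for x real,
     S(x) = \sum_(a in D) e(a x / p),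
   so that \hat{delta_{p^-1 D}}(x) = S(x) / #D.  The proof only uses that D
   is a complete residue system modulo p (which a Hadamard triple with
   #D = p forces, since two congruent digits would give two equal columns of
   the unitary matrix) and that 0 is in D.  For such D:
   - S(j) = 0 for every integer j not divisible by p (orthogonality of the
     p-th roots of unity), and the Fourier inversion formula
     \sum_(l < p) S(x + l) e(-d l / p) = p e(d x / p) holds for d in D;
   - hence the values S(xi + l), l < p, sum to p, so xi is NOT a double
     point exactly when they vanish except at a single "peak" l0;
   - by inversion, a peak at l0 means e(d (xi + l0) / p) = 1 for all d in D
     ("xi + l0 is resonant"), and conversely resonance forces a peak since
     S is invariant under translation by resonant points;
   - finally, by Bezout on gcd D and since gcd D is invertible mod p, some
     xi + l0 is resonant iff xi is in (1/gcd D) Z. *)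

Section ComplexExponential.
Context {R : realType}.
Local Open Scope complex_scope.
Implicit Types (x y : R).

Lemma expi0 : expi (0 : R) = 1.
Proof. by rewrite /expi mulr0 cos0 sin0. Qed.

Lemma expiD x y : expi (x + y) = expi x * expi y.
Proof.
rewrite /expi mulrDr cosD sinD; apply/eqP; rewrite eq_complex /=.
by apply/andP; split; apply/eqP; ring.
Qed.

Lemma expiNK x : expi (- x) * expi x = 1.
Proof. by rewrite -expiD addNr expi0. Qed.

Lemma expi_add1 x : expi (x + 1) = expi x.
Proof. by rewrite /expi mulrDr mulr1 !mulr_natl cosD2pi sinD2pi. Qed.

Lemma expi_int (n : int) : expi (n%:~R : R) = 1.
Proof.
have expi_nat (m : nat) : expi (m%:R : R) = 1.
  by elim: m => [|m IH]; rewrite ?expi0 // -natr1 expi_add1.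
case: n => m; first exact: expi_nat.
by rewrite NegzE mulrNz -[LHS]mulr1 -(expi_nat m.+1) expiNK.
Qed.

Lemma expi_Dint x (n : int) : expi (x + n%:~R) = expi x.
Proof. by rewrite expiD expi_int mulr1. Qed.

Lemma expiX x (j : nat) : expi x ^+ j = expi (j%:R * x).
Proof.
elim: j => [|j IH]; first by rewrite expr0 mul0r expi0.
by rewrite exprS IH -expiD -natr1 mulrDl mul1r addrC.
Qed.

Lemma conj_scale_expi (s x : R) : Num.conj (s%:C * expi x) = s%:C * expi (- x).
Proof.
rewrite /expi mulrN cosN sinN; apply/eqP; rewrite eq_complex /=.
by apply/andP; split; apply/eqP; ring.
Qed.

Lemma cos2pi_eq1 y : 0 <= y <= 2^-1 -> cos (2 * pi * y) = 1 -> y = 0.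
Proof.
move=> /andP[y_ge0 y_le] cos1; have pi_gt0 := pi_gt0 R.
have : 2 * pi * y = 0.
  apply: cos_inj; rewrite ?cos0 // !in_itv /= ?lexx ?(ltW pi_gt0) //.
  by apply/andP; split; nra.
by move/eqP; rewrite !mulf_eq0 pnatr_eq0 (gt_eqF pi_gt0) /= => /eqP.
Qed.

Lemma expi_eq1 {x} : expi x = 1 -> exists n : int, x = n%:~R.
Proof.
move=> ex1; exists (Num.floor x).
pose y := x - (Num.floor x)%:~R.
suff : y = 0 by move/eqP; rewrite subr_eq0 => /eqP.
have ey1 : expi y = 1 by rewrite /y -mulrNz expi_Dint.
have y_ge0 : 0 <= y by rewrite subr_ge0 floor_le.
have y_lt1 : y < 1 by have := floorD1_gt x; rewrite intrD /y; lra.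
have cos_of t : expi t = 1 -> cos (2 * pi * t) = 1 by rewrite /expi => -[].
have [y_le|y_gt] := lerP y 2^-1; first by apply: cos2pi_eq1; rewrite ?y_ge0 ?cos_of.
have : 1 - y = 0.
  apply: cos2pi_eq1; first by apply/andP; split; lra.
  by apply: cos_of; rewrite addrC expi_add1 -[LHS]mulr1 -ey1 expiNK.
lra.
Qed.

Lemma sum_roots_of_unity {p : nat} {j : int} : (0 < p)%N -> ~~ (p%:Z %| j)%Z ->
  \sum_(r < p) expi ((p%:R : R)^-1 * j%:~R * r%:R) = 0.
Proof.
move=> p_gt0 ndvd; pose w := expi ((p%:R : R)^-1 * j%:~R).
under eq_bigr => r _ do rewrite mulrC -expiX -/w.
have pn0 : (p%:R : R) != 0 by rewrite pnatr_eq0 -lt0n.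
have wp1 : w ^+ p = 1 by rewrite /w expiX mulrA mulfV // mul1r expi_int.
have w_neq1 : w != 1.
  apply/eqP => /expi_eq1 [n hn]; apply: (negP ndvd); apply/dvdzP; exists n.
  by apply: (@intr_inj R); rewrite intrM -hn mulrAC mulVf ?mul1r.
have := subrX1 w p; rewrite wp1 subrr => /esym/eqP.
by rewrite mulf_eq0 subr_eq0 (negbTE w_neq1) => /eqP.
Qed.

End ComplexExponential.

Lemma gcd_seq_dvd {D : seq int} {d : int} : d \in D -> (gcd_seq D %| d)%Z.
Proof.
elim: D => // a D IH; rewrite inE => /orP[/eqP -> | /IH dvd_d] /=.
  exact: dvdz_gcdl.
exact: dvdz_trans (dvdz_gcdr _ _) dvd_d.
Qed.

(* ... and, by Bezout, is an integral combination of them: if y is an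
   integer when multiplied by each element of D, so it is by gcd D *)
Lemma gcd_seq_bezout {R : pzRingType} {D : seq int} {y : R} :
  (forall d, d \in D -> exists n : int, d%:~R * y = n%:~R) ->
  exists n : int, (gcd_seq D)%:~R * y = n%:~R.
Proof.
elim: D => [|a D IH] intD; first by exists 0; rewrite mul0r.
have [m eq_m] : exists m : int, (gcd_seq D)%:~R * y = m%:~R.
  by apply: IH => d dD; apply: intD; rewrite inE dD orbT.
have [n eq_n] := intD a (mem_head _ _).
have [u [v bezout]] := Bezoutz a (gcd_seq D).
exists (u * n + v * m); rewrite /= -bezout intrD !intrM mulrDl -!mulrA eq_n eq_m.
by rewrite -!intrM -intrD.
Qed.

(* In a Hadamard triple, distinct elements of D are incongruent modulo p:
   congruent digits would give two equal columns, whose inner product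
   would be 1 instead of 0. *)
Lemma hadamard_incongruent {R : realType} {p : nat} {D L : seq int} :
  hadamard_triple R p D L ->
  forall a b, a \in D -> b \in D -> (p%:Z %| a - b)%Z -> a = b.
Proof.
case=> p_gt1 _ _ [eLD [_ unitary]] a b aD bD dvd_ab.
have [//|a_neq_b] := eqVneq a b; exfalso.
have ia : (index a D < size D)%N by rewrite index_mem.
have ib : (index b D < size D)%N by rewrite index_mem.
pose i := Ordinal ia; pose j := Ordinal ib.
have i_neq_j : i != j.
  apply: contra a_neq_b => /eqP/(congr1 (fun k : 'I__ => nth 0 D k)) /=.
  by rewrite !nth_index // => ->.
have sizeD_gt0 : (0 < size D)%N by case: (D) aD.
have pn0 : (p%:R : R) != 0 by rewrite pnatr_eq0 -lt0n ltnW.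
have term k : Num.conj (castmx (eLD, erefl) (hadamard_mx R p D L) k i) *
              castmx (eLD, erefl) (hadamard_mx R p D L) k j
              = ((Num.sqrt ((size D)%:R : R))^-1 ^+ 2)%:C%C.
  rewrite !castmxE !mxE /= !nth_index // conj_scale_expi mulrACA -expiD.
  have [q ->] : exists q, a = q * p%:Z + b.
    by case/dvdzP: dvd_ab => q eq_q; exists q; rewrite -eq_q subrK.
  rewrite (_ : - _ + _ = (- q * L`_(cast_ord (esym eLD) k))%:~R :> R) ?expi_int.
    by rewrite mulr1 expr2 rmorphM.
  by rewrite !(intrM, intrD, intrN) (_ : (p%:Z)%:~R = p%:R :> R) //; field.
move/matrixP: unitary => /(_ i j); rewrite !mxE (negbTE i_neq_j) /=.
under eq_bigr => k _ do rewrite !mxE term.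
rewrite sumr_const card_ord -rmorphMn exprVn sqr_sqrtr ?ler0n // -mulr_natr.
by rewrite mulVf ?pnatr_eq0 -?lt0n // => -[] /eqP; rewrite oner_eq0.
Qed.

(* S(x) = \sum_(a <- D) e(a x / p), the Fourier transform of the uniform
   measure on p^-1 D up to the factor 1 / #D *)
Definition char_sum (R : realType) (p : nat) (D : seq int) (x : R) : R[i] :=
  \sum_(a <- D) expi ((p%:R : R)^-1 * a%:~R * x).

Arguments char_sum {R}.

Lemma congr_small {p l l' : nat} : (l < p)%N -> (l' < p)%N ->
  (p%:Z %| l%:Z - l'%:Z)%Z -> l = l'.
Proof. by move=> lp l'p /dvdzP[[[|n]|n] eq_q]; rewrite ?NegzE in eq_q; nia. Qed.

Section CompleteResidueSystem.
Variables (p : nat) (D : seq int).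
Hypotheses (p_gt1 : (1 < p)%N) (uniqD : uniq D) (sizeD : size D = p)
  (incongruent : forall a b, a \in D -> b \in D -> (p%:Z %| a - b)%Z -> a = b).

Let p_gt0 : (0 < p)%N. Proof. exact: ltnW. Qed.
Let pZ_neq0 : p%:Z != 0. Proof. by rewrite eqz_nat -lt0n. Qed.

Lemma residues_perm :
  perm_eq [seq (a %% p%:Z)%Z | a <- D] [seq r%:Z | r <- iota 0 p].
Proof.
have uniq_res : uniq [seq (a %% p%:Z)%Z | a <- D].
  rewrite map_inj_in_uniq // => a b aD bD eq_ab; apply: incongruent => //.
  apply/dvdzP; exists ((a %/ p%:Z)%Z - (b %/ p%:Z)%Z).
  by rewrite {1}(divz_eq a p%:Z) {1}(divz_eq b p%:Z) eq_ab mulrBl; ring.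
have sub_res : {subset [seq (a %% p%:Z)%Z | a <- D] <= [seq r%:Z | r <- iota 0 p]}.
  move=> _ /mapP[a aD ->]; move: (modz_ge0 a pZ_neq0) (ltz_mod a pZ_neq0).
  case: (a %% p%:Z)%Z => // n _ n_lt; apply/mapP; exists n => //.
  by rewrite mem_iota add0n -ltz_nat.
have [|_ eq_res] := uniq_min_size uniq_res sub_res.
  by rewrite !size_map size_iota sizeD.
by apply: uniq_perm => //; rewrite map_inj_uniq ?iota_uniq // => x y [].
Qed.

Lemma sum_residues {V : nmodType} (F : int -> V) :
  \sum_(a <- D) F (a %% p%:Z)%Z = \sum_(r < p) F r%:Z.
Proof.
rewrite -(big_map (fun a => (a %% p%:Z)%Z) xpredT F) (perm_big _ residues_perm).
by rewrite big_map -(big_mkord xpredT (fun r => F r%:Z)) /index_iota subn0.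
Qed.

(* some digit is congruent to 1, so gcd D is invertible modulo p *)
Lemma residue_one : exists2 d, d \in D & (d %% p%:Z)%Z = 1.
Proof.
have : 1%:Z \in [seq r%:Z | r <- iota 0 p] by apply/mapP; exists 1%N; rewrite ?mem_iota.
by rewrite -(perm_mem residues_perm) => /mapP[d dD /esym]; exists d.
Qed.

Lemma gcd_seq_invertible : exists t : int, (p%:Z %| gcd_seq D * t - 1)%Z.
Proof.
have [d dD d_mod] := residue_one; have /dvdzP[t dt] := gcd_seq_dvd dD.
exists t; apply/dvdzP; exists (d %/ p%:Z)%Z.
by rewrite mulrC -dt {1}(divz_eq d p%:Z) d_mod addrK.
Qed.

Lemma gcd_seq_neq0 : gcd_seq D != 0.
Proof.
have [d dD d_mod] := residue_one; have := gcd_seq_dvd dD.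
apply: contraTneq => ->; rewrite dvd0z; apply/eqP => d0.
by move: d_mod; rewrite d0 mod0z.
Qed.

Lemma gcd_seq_shift (k : int) :
  exists2 l0 : nat, (l0 < p)%N & (p%:Z %| k + l0%:Z * gcd_seq D)%Z.
Proof.
have [t inv_t] := gcd_seq_invertible; set g := gcd_seq D in inv_t *.
have := divz_eq (- k * t) p%:Z.
move: (modz_ge0 (- k * t) pZ_neq0) (ltz_mod (- k * t) pZ_neq0).
case: (- k * t %% p%:Z)%Z => [l0|] // _ l0_lt div_kt.
exists l0; first by rewrite -ltz_nat.
set q := ((- k * t) %/ p%:Z)%Z in div_kt.
have -> : k + l0%:Z * g = - k * (g * t - 1) - q * g * p%:Z.
  by rewrite (_ : l0%:Z = - k * t - q * p%:Z); [ring | rewrite div_kt; ring].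
by rewrite rpredB // dvdz_mull // dvdzz.
Qed.

Variable R : realType.
Local Notation S := (@char_sum R p D).

Let pR_neq0 : (p%:R : R) != 0. Proof. by rewrite pnatr_eq0 -lt0n. Qed.
Let pC_neq0 : (p%:R : R[i]) != 0. Proof. by rewrite pnatr_eq0 -lt0n. Qed.

(* S vanishes at the integers not divisible by p, since the phases
   e(a j / p) only depend on a modulo p *)
Lemma char_sum_int (j : int) : ~~ (p%:Z %| j)%Z -> S j%:~R = 0.
Proof.
move=> ndvd; rewrite /char_sum.
have reduce a : expi ((p%:R : R)^-1 * a%:~R * j%:~R) =
                expi ((p%:R : R)^-1 * (a %% p%:Z)%Z%:~R * j%:~R).
  rewrite {1}(divz_eq a p%:Z) intrD intrM mulrDr mulrDl addrC.
  rewrite (_ : _ * (_ * _) * _ = ((a %/ p%:Z)%Z * j)%:~R) ?expi_Dint //.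
  by rewrite intrM (_ : (p%:Z)%:~R = p%:R :> R) //; field.
under eq_bigr => a _ do rewrite reduce.
rewrite (sum_residues (fun r => expi ((p%:R : R)^-1 * r%:~R * j%:~R))).
rewrite -[RHS](sum_roots_of_unity p_gt0 ndvd); apply: eq_bigr => r _.
by rewrite mulrAC.
Qed.

Lemma char_sum_inversion (xi : R) {d : int} : d \in D ->
  \sum_(l < p) S (xi + l%:R) * expi (- ((p%:R : R)^-1 * d%:~R * l%:R))
  = p%:R * expi ((p%:R : R)^-1 * d%:~R * xi).
Proof.
move=> dD; set c := (p%:R : R)^-1.
under eq_bigr do rewrite /char_sum big_distrl /=.
rewrite exchange_big /=.
have split_phase a (l : 'I_p) :
    expi (c * a%:~R * (xi + l%:R)) * expi (- (c * d%:~R * l%:R))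
    = expi (c * a%:~R * xi) * expi (c * (a - d)%:~R * l%:R).
  by rewrite -!expiD; congr expi; rewrite intrB; ring.
under eq_bigr => a _ do rewrite (eq_bigr _ (fun l _ => split_phase a l)) -big_distrr /=.
rewrite (bigD1_seq d) //= [X in _ + X]big1_seq ?addr0 => [|a /andP[a_neq_d aD]].
  under eq_bigr do rewrite subrr mulr0z mulr0 mul0r expi0.
  by rewrite sumr_const card_ord mulrC.
rewrite sum_roots_of_unity ?mulr0 //; apply: contra a_neq_d => dvd_ad.
by apply/eqP; apply: incongruent.
Qed.

Lemma char_sum_total (xi : R) : 0 \in D -> \sum_(l < p) S (xi + l%:R) = p%:R.
Proof.
move=> D0; have := char_sum_inversion xi D0.
rewrite mulr0z mulr0 mul0r expi0 mulr1 => <-.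
by apply: eq_bigr => l _; rewrite mul0r oppr0 expi0 mulr1.
Qed.

Definition resonant (y : R) : Prop :=
  forall d, d \in D -> expi ((p%:R : R)^-1 * d%:~R * y) = 1.

Definition peak (xi : R) (l0 : nat) : Prop :=
  forall l, (l < p)%N -> l != l0 -> S (xi + l%:R) = 0.

Lemma char_sum_translate (y z : R) : resonant y -> S (y + z) = S z.
Proof.
by move=> res_y; apply: eq_big_seq => a aD; rewrite mulrDr expiD res_y ?mul1r.
Qed.

Lemma resonant_peak (xi : R) (l0 : nat) :
  (l0 < p)%N -> resonant (xi + l0%:R) -> peak xi l0.
Proof.
move=> l0p res l lp l_neq.
rewrite (_ : xi + l%:R = xi + l0%:R + (l%:Z - l0%:Z)%:~R); last by rewrite intrB; ring.
rewrite char_sum_translate // char_sum_int //.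
by apply: contra l_neq => /(congr_small lp l0p) ->.
Qed.

(* by inversion, at a peak S equals p and the phases e(d (xi + l0) / p)
   all equal 1 *)
Lemma peak_resonant (xi : R) (l0 : nat) :
  0 \in D -> (l0 < p)%N -> peak xi l0 -> resonant (xi + l0%:R).
Proof.
move=> D0 l0p pk; pose i0 := Ordinal l0p.
have collapse F : \sum_(l < p) S (xi + l%:R) * F l = S (xi + l0%:R) * F i0.
  by rewrite (bigD1 i0) //= big1 ?addr0 // => l l_neq; rewrite pk ?mul0r.
have S_l0 : S (xi + l0%:R) = p%:R.
  rewrite -(char_sum_total xi D0) -[LHS]mulr1 -(collapse (fun=> 1)).
  by apply: eq_bigr => l _; rewrite mulr1.
move=> d dD; have := char_sum_inversion xi dD.
rewrite collapse S_l0 => /(mulfI pC_neq0) inv_d.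
by rewrite mulrDr expiD -inv_d expiNK.
Qed.

Lemma resonant_lattice (xi : R) :
  (exists2 l0 : nat, (l0 < p)%N & resonant (xi + l0%:R)) <->
  exists k : int, xi = k%:~R / (gcd_seq D)%:~R.
Proof.
have gR_neq0 : ((gcd_seq D)%:~R : R) != 0 by rewrite intr_eq0 gcd_seq_neq0.
split=> [[l0 _ res] | [k ->]].
  have int_d d : d \in D ->
      exists n : int, d%:~R * ((p%:R : R)^-1 * (xi + l0%:R)) = n%:~R.
    by move=> dD; have [n eq_n] := expi_eq1 (res d dD); exists n; rewrite -eq_n; ring.
  have [n eq_n] := gcd_seq_bezout int_d.
  exists (p%:Z * n - gcd_seq D * l0%:Z).
  rewrite intrB !intrM -eq_n (_ : (p%:Z)%:~R = p%:R :> R) //.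
  by field; apply/andP.
have [l0 l0p /dvdzP[m eq_m]] := gcd_seq_shift k.
exists l0 => // d dD; have /dvdzP[t ->] := gcd_seq_dvd dD.
have eq_mR : (m%:~R : R) = (k%:~R + l0%:R * (gcd_seq D)%:~R) / p%:R.
  have := congr1 (fun z : int => z%:~R : R) eq_m; rewrite /= intrD !intrM => ->.
  by rewrite mulfK.
rewrite (_ : _ * _ * _ = (t * m)%:~R) ?expi_int // !intrM eq_mR.
by field; apply/andP.
Qed.

Lemma ft_delta_neq0 (x : R) : (ft_delta (p%:R^-1) D x != 0) = (S x != 0).
Proof. by rewrite /ft_delta mulf_eq0 invr_eq0 sizeD pnatr_eq0 (gtn_eqF p_gt0). Qed.

(* since the S (xi + l), l < p, sum to p, xi is a double point exactly
   when it has no peak *)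
Lemma double_point_peak (xi : R) : 0 \in D ->
  (exists l1 l2 : nat, [/\ (l1 < p)%N, (l2 < p)%N, l1 <> l2,
     ft_delta (p%:R^-1) D (xi + l1%:R) != 0 &
     ft_delta (p%:R^-1) D (xi + l2%:R) != 0])
  <-> ~ exists2 l0, (l0 < p)%N & peak xi l0.
Proof.
move=> D0; split=> [[l1 [l2 [l1p l2p l12]]] | no_peak].
  rewrite !ft_delta_neq0 => S1 S2 [l0 l0p pk].
  have at_peak l : (l < p)%N -> S (xi + l%:R) != 0 -> l = l0.
    by move=> lp; apply: contraNeq => /(pk _ lp) ->; rewrite eqxx.
  by apply: l12; rewrite (at_peak l1) // (at_peak l2).
apply: contrapT => no_double; apply: no_peak.
have /existsP[l0 S_l0] : [exists l : 'I_p, S (xi + l%:R) != 0].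
  apply: contraTT pC_neq0 => /existsPn all0; rewrite negbK.
  by rewrite -(char_sum_total xi D0) big1 // => l _; apply/eqP/negPn; exact: all0.
exists l0 => // l lp l_neq; apply: contrapT => /eqP S_l; apply: no_double.
exists l0, l; split; rewrite ?ft_delta_neq0 //.
by apply/eqP; rewrite eq_sym.
Qed.

Lemma Tset_residue_system : 0 \in D ->
  Tset R p D =
    [set xi : R | 0 <= xi < 1 /\
       ~ exists k : int, xi = k%:~R / (gcd_seq D)%:~R].
Proof.
move=> D0.
have peak_lattice xi : (exists2 l0, (l0 < p)%N & peak xi l0) <->
    exists k : int, xi = k%:~R / (gcd_seq D)%:~R.
  rewrite -resonant_lattice; split=> -[l0 l0p H]; exists l0 => //.
    exact: peak_resonant.
  exact: resonant_peak.
apply/seteqP; split=> xi [xi01 H]; split=> //.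
  by move=> /peak_lattice; apply/(double_point_peak xi D0).
by apply/(double_point_peak xi D0) => /peak_lattice.
Qed.

End CompleteResidueSystem.

Theorem lemma3p3 (R : realType) (p : nat) (D L : seq int) :
  hadamard_triple R p D L ->
  0 \in D -> all (fun d : int => 0 <= d) D -> p = size D ->
  Tset R p D =
    [set xi : R | 0 <= xi < 1 /\
       ~ exists k : int, xi = k%:~R / (gcd_seq D)%:~R].
Proof.
move=> triple D0 _ pD.
have incongruent := hadamard_incongruent triple.
case: triple => p_gt1 uniqD _ _.
exact: Tset_residue_system p_gt1 uniqD (esym pD) incongruent R D0.
Qed.
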